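(* Consider the $N$-layer cascade of the context and let $2\le n\le N$. Let $\mathcal{M}=\prod_{j=1}^M z_j$ be a monomial appearing in $s_{n-1,L_{n-1}}^{(\ell_0)}$ for some $\ell_0\ge1$ and in no derivative $s_{n-1,L_{n-1}}^{(\ell)}$ with $1\le\ell<\ell_0$, with coefficient $C_{\mathcal{M}}$ in $s_{n-1,L_{n-1}}^{(\ell_0)}$, and such that every $Z_j$ belongs to $\mathscr{S}^{(k)}$ or $\mathscr{S}^{(N+k)}$ for some $1\le k\le n-1$, or to $\mathscr{S}^{(2N+1)}$. Assume: $\mathcal{M}$ is square-free and does not involve two disjoint pairs of variables corresponding to species that react together; and if $s_{n-1,L_{n-1}}$ divides $\mathcal{M}$, then for all $j_1,j_2$ such that $Z_{j_1}$ and $Z_{j_2}$ react together, $Z_{j_1}=S_{n-1,L_{n-1}}$ or $Z_{j_2}=S_{n-1,L_{n-1}}$. Then $\widehat{\mathcal{M}}:=s_{n,L_n-1}\mathcal{M}$ appears in $s_{n,L_n}^{(\ell_0+2)}$ and in no derivative $s_{n,L_n}^{(\ell)}$ with $1\le\ell<\ell_0+2$, and its coefficient in $s_{n,L_n}^{(\ell_0+2)}$ is $c_{n,L_n}a_{n,L_n}C_{\mathcal{M}}$.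
   Context: Species are capital letters, concentrations lower-case letters. Mass-action system: $\dot{\mathbf{x}}=\sum_{y\to y'}k_{yy'}\mathbf{x}^y(y'-y)$. Total derivative: $\dot\varphi=\sum_i\frac{\partial\varphi}{\partial x_i}\dot x_i$ with $\dot x_i$ replaced by the right-hand side; $\varphi^{(\ell)}$ the $\ell$-th iterate, a polynomial in concentrations with coefficients polynomial in the rate constants; a monomial appears if its coefficient is nonzero. A non-intermediate $X_1$ reacts with a non-intermediate $X_2$ if there is a reaction $X_1+X_2\to W$ with $W$ intermediate. Cascade: $N\ge1$, $L_1,\dots,L_N\ge1$. Non-intermediate species $E$, pairwise distinct $F_1,\dots,F_N$, and $S_{m,j}$ ($1\le m\le N$, $0\le j\le L_m$), all distinct; intermediates $U_{m,j},V_{m,j}$ ($1\le j\le L_m$), all distinct. $S_{0,L_0}:=E$. For each $m$, $1\le j\le L_m$: $S_{m-1,L_{m-1}}+S_{m,j-1}\to U_{m,j}$ (rate $a_{m,j}$), $U_{m,j}\to S_{m-1,L_{m-1}}+S_{m,j-1}$ ($b_{m,j}$), $U_{m,j}\to S_{m-1,L_{m-1}}+S_{m,j}$ ($c_{m,j}$), $F_m+S_{m,j}\to V_{m,j}$ ($\tilde a_{m,j}$), $V_{m,j}\to F_m+S_{m,j}$ ($\tilde b_{m,j}$), $V_{m,j}\to F_m+S_{m,j-1}$ ($\tilde c_{m,j}$). Partition of non-intermediates: $\mathscr{S}^{(m)}=\{S_{m,0},\dots,S_{m,L_m}\}$, $\mathscr{S}^{(N+m)}=\{F_m\}$ ($1\le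 m\le N$), $\mathscr{S}^{(2N+1)}=\{E\}$. *)

From HB Require Import structures.
From mathcomp Require Import all_boot all_order all_algebra.
Set Implicit Arguments.
Unset Strict Implicit.
Unset Printing Implicit Defensive.
Import GRing.Theory Num.Theory.

(* Esp = E, Fsp m = F_m, Ssp m j = S_{m,j}, Usp m j = U_{m,j}, Vsp m j = V_{m,j}.
   Distinct constructors/arguments give distinct species, as in the paper. *)
Inductive species := Esp | Fsp of nat | Ssp of nat & nat | Usp of nat & nat | Vsp of nat & nat.

Definition species_enc (s : species) : nat * nat * nat :=
  match s with
  | Esp => (0, 0, 0) | Fsp m => (1, m, 0) | Ssp m j => (2, m, j)
  | Usp m j => (3, m, j) | Vsp m j => (4, m, j) end.
Definition species_dec (t : nat * nat * nat) : species :=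
  match t with
  | (0, _, _) => Esp | (1, m, _) => Fsp m | (2, m, j) => Ssp m j
  | (3, m, j) => Usp m j | (_, m, j) => Vsp m j end.
Lemma species_encK : cancel species_enc species_dec. Proof. by case. Qed.
HB.instance Definition _ := Countable.copy species (can_type species_encK).

Definition intermediate (s : species) : bool :=
  match s with Usp _ _ | Vsp _ _ => true | _ => false end.

(* rate label (t, m, j): t = 0,1,2,3,4,5 for a, b, c, ~a, ~b, ~c (index m,j) *)
Definition rlabel := (nat * nat * nat)%type.
Definition ra m j : rlabel := (0, m, j).
Definition rb m j : rlabel := (1, m, j).
Definition rc m j : rlabel := (2, m, j).
Definition rat_ m j : rlabel := (3, m, j).
Definition rbt m j : rlabel := (4, m, j).
Definition rct m j : rlabel := (5, m, j).

(* complexes are multisets of species, given as lists *)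
Record reaction := Rxn { rlhs : seq species; rrhs : seq species; rlab : rlabel }.

(* S_{m,L_m}, with the convention S_{0,L_0} := E *)
Definition topS (L : nat -> nat) (m : nat) : species :=
  if m is 0 then Esp else Ssp m (L m).

Definition layer_rxns (L : nat -> nat) (m j : nat) : seq reaction :=
  let X := topS L m.-1 in
  [:: Rxn [:: X; Ssp m j.-1] [:: Usp m j] (ra m j);
      Rxn [:: Usp m j] [:: X; Ssp m j.-1] (rb m j);
      Rxn [:: Usp m j] [:: X; Ssp m j] (rc m j);
      Rxn [:: Fsp m; Ssp m j] [:: Vsp m j] (rat_ m j);
      Rxn [:: Vsp m j] [:: Fsp m; Ssp m j] (rbt m j);
      Rxn [:: Vsp m j] [:: Fsp m; Ssp m j.-1] (rct m j)].

Definition cascade (N : nat) (L : nat -> nat) : seq reaction :=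
  flatten [seq flatten [seq layer_rxns L m j | j <- iota 1 (L m)] | m <- iota 1 N].

(* A term ((c, r), x) stands for  c * (prod of rate constants in r) * (prod of
   concentrations of species in x); a polynomial is a (formal) sum of terms. *)
Definition term := ((int * seq rlabel) * seq species)%type.
Definition poly := seq term.

(* total derivative of one term along the mass-action vector field of net:
   sum_i d/dx_i(term) * sum_{y -> y'} k x^y (y'_i - y_i) *)
Definition deriv_term (net : seq reaction) (t : term) : poly :=
  let: ((c, r), x) := t in
  flatten [seq [seq (((c * Posz (count_mem i x)
                       * (Posz (count_mem i (rrhs rx)) - Posz (count_mem i (rlhs rx))))%R,
                      rlab rx :: r),
                     rlhs rx ++ rem i x) | rx <- net] | i <- undup x].

Definition deriv (net : seq reaction) (P : poly) : poly :=
  flatten [seq deriv_term net t | t <- P].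

Definition iter_deriv (net : seq reaction) (ell : nat) (s : species) : poly :=
  iter ell (deriv net) [:: ((Posz 1, [::]), [:: s])].

Definition rpoly := seq (int * seq rlabel).
Definition rcoef (p : rpoly) (r : seq rlabel) : int :=
  (\sum_(t <- p | perm_eq t.2 r) t.1)%R.
Definition rpoly_eq (p q : rpoly) : Prop := forall r, rcoef p r = rcoef q r.
Definition rmul_mon (u : seq rlabel) (p : rpoly) : rpoly :=
  [seq (t.1, u ++ t.2) | t <- p].

Definition coef_of (P : poly) (M : seq species) : rpoly :=
  [seq t.1 | t <- P & perm_eq t.2 M].

Definition appears (P : poly) (M : seq species) : Prop :=
  exists r, rcoef (coef_of P M) r != 0.

Definition reacts (net : seq reaction) (X Y : species) : bool :=
  [&& ~~ intermediate X, ~~ intermediate Y &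
   has (fun rx => perm_eq (rlhs rx) [:: X; Y] &&
                  (if rrhs rx is [:: W] then intermediate W else false)) net].

From Pilot Require Import Defs.
From HB Require Import structures.
From mathcomp Require Import all_boot all_order all_algebra zify.
Set Implicit Arguments.
Unset Strict Implicit.
Unset Printing Implicit Defensive.
Import GRing.Theory Num.Theory.

(* The only route from s_{n,L_n} to the monomial s_{n,L_n-1} M runs backwards
   through the reaction c_{n,L_n} to u_{n,L_n}, then backwards through
   a_{n,L_n} to s_{n-1,L_{n-1}} s_{n,L_n-1}; from there the factor s_{n,L_n-1}
   must be kept while s_{n-1,L_{n-1}} reproduces M exactly as its own
   derivatives do.  Every other route is blocked by an invariant of the
   monomials that s_{n,L_n-1} M violates: a species of layer > n or of the
   form F_n, V_{n,j} is never removed; the number of species of layer >= n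
   never decreases; and a monomial containing two disjoint reactant complexes
   keeps containing two, since each step replaces one species by a reactant
   complex.  The hypotheses on reacting pairs of M exclude the last case. *)

Definition reaction_enc (rx : reaction) := (rlhs rx, rrhs rx, rlab rx).
Definition reaction_dec (t : seq species * seq species * rlabel) :=
  Rxn t.1.1 t.1.2 t.2.
Lemma reaction_encK : cancel reaction_enc reaction_dec. Proof. by case. Qed.
HB.instance Definition _ := Countable.copy reaction (can_type reaction_encK).

Lemma species_eqE (x y : species) : (x == y) = (species_enc x == species_enc y).
Proof. by apply/eqP/eqP => [->|/(can_inj species_encK)]. Qed.

Lemma rem_catl (T : eqType) (i : T) x y : i \in x -> rem i (x ++ y) = rem i x ++ y.
Proof. by elim: x => //= a x IH; rewrite inE; case: eqVneq => //= _ /IH ->. Qed.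

Lemma rem_catr (T : eqType) (i : T) x y : i \notin x -> rem i (x ++ y) = x ++ rem i y.
Proof.
elim: x => //= a x IH; rewrite inE negb_or eq_sym => /andP [/negbTE -> Hi].
by rewrite IH.
Qed.

Lemma count_remE (T : eqType) (p : pred T) i s :
  i \in s -> count p s = (p i + count p (rem i s))%N.
Proof. by move/perm_to_rem/permP => /(_ p) ->. Qed.

Lemma perm_eq_pair (T : eqType) (a b c d : T) : perm_eq [:: a; b] [:: c; d] ->
  (a = c /\ b = d) \/ (a = d /\ b = c).
Proof.
move=> H; have: a \in [:: c; d] by rewrite -(perm_mem H) inE eqxx.
rewrite !inE => /orP [/eqP Ea | /eqP Ea]; subst a.
  move: H; rewrite perm_cons => /perm_mem H.
  by left; split => //; move: (H b); rewrite !inE eqxx => /esym /eqP.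
have: perm_eq [:: d; b] [:: d; c].
  by apply: (perm_trans H); rewrite (perm_catC [:: c] [:: d]).
rewrite perm_cons => /perm_mem H2.
by right; split => //; move: (H2 b); rewrite !inE eqxx => /esym /eqP.
Qed.

Lemma big_count1 (R : nmodType) (I : eqType) (s : seq I) (p : pred I)
    (F : I -> R) (x : R) :
  count p s = 1%N -> (forall i, i \in s -> p i -> F i = x) ->
  (\sum_(i <- s | p i) F i)%R = x.
Proof.
move=> Hc HF; rewrite big_seq_cond (eq_bigr (fun=> x)).
  by rewrite -big_seq_cond big_const_seq Hc /= addr0.
by move=> i /andP []; exact: HF.
Qed.

Definition coef_at (P : Defs.poly) (T : seq species) (r : seq rlabel) : int :=
  (\sum_(t <- P | perm_eq t.2 T && perm_eq t.1.2 r) t.1.1)%R.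

Lemma rcoef_coef_of P T r : rcoef (coef_of P T) r = coef_at P T r.
Proof. by rewrite /rcoef /coef_of big_map big_filter_cond. Qed.

Lemma coef_at_cat P Q T r : coef_at (P ++ Q) T r = (coef_at P T r + coef_at Q T r)%R.
Proof. by rewrite /coef_at big_cat. Qed.

Lemma coef_at_eq0 P T r :
  (forall t, t \in P -> perm_eq t.2 T -> t.1.1 = 0%R) -> coef_at P T r = 0%R.
Proof.
by move=> H; rewrite /coef_at big_seq_cond big1 // => t /and3P [Ht HT _]; exact: H.
Qed.

Definition coef_rmul (P : Defs.poly) (T : seq species) (rho r : seq rlabel) : int :=
  (\sum_(t <- P | perm_eq t.2 T && perm_eq (t.1.2 ++ rho) r) t.1.1)%R.

Lemma coef_rmul_perm P T rho rho' r :
  perm_eq rho rho' -> coef_rmul P T rho r = coef_rmul P T rho' r.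
Proof.
move=> Hp; apply: eq_bigl => t; congr andb.
by have /permPl -> : perm_eq (t.1.2 ++ rho) (t.1.2 ++ rho') by rewrite perm_cat2l.
Qed.

Lemma rcoef_rmul_mon u P T r : rcoef (rmul_mon u (coef_of P T)) r = coef_rmul P T u r.
Proof.
rewrite /rcoef /rmul_mon /coef_of !big_map big_filter_cond; apply: eq_bigl => t /=.
by have /permPl -> : perm_eq (t.1.2 ++ u) (u ++ t.1.2) by rewrite perm_catC.
Qed.

Lemma rcoef_rmul_mon_cat u (p : rpoly) r : rcoef (rmul_mon u p) (u ++ r) = rcoef p r.
Proof. by rewrite /rcoef /rmul_mon big_map; apply: eq_bigl => t /=; rewrite perm_cat2l. Qed.

Definition net_change (y : species) (rx : reaction) : int :=
  (Posz (count_mem y (rrhs rx)) - Posz (count_mem y (rlhs rx)))%R.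

Lemma mem_changed (rx : reaction) i :
  count_mem i (rrhs rx) != count_mem i (rlhs rx) -> i \in rlhs rx ++ rrhs rx.
Proof.
by apply: contraR; rewrite mem_cat => /norP [/count_memPn -> /count_memPn ->].
Qed.

Section TotalDerivative.
Variable net : seq reaction.
Local Notation D := (Defs.deriv net).

Lemma deriv_cat P Q : D (P ++ Q) = D P ++ D Q.
Proof. by rewrite /Defs.deriv map_cat flatten_cat. Qed.

Lemma iter_deriv_cat k P Q : iter k D (P ++ Q) = iter k D P ++ iter k D Q.
Proof. by elim: k => //= k ->; exact: deriv_cat. Qed.

Lemma iter_deriv_nil k : iter k D [::] = [::].
Proof. by elim: k => //= k ->. Qed.

Lemma coef_iter_deriv_sum k P T r :
  coef_at (iter k D P) T r = (\sum_(t <- P) coef_at (iter k D [:: t]) T r)%R.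
Proof.
elim: P => [|t P IH]; first by rewrite iter_deriv_nil big_nil /coef_at big_nil.
by rewrite big_cons -cat1s iter_deriv_cat coef_at_cat IH.
Qed.

Lemma iter_deriv_term k t : iter k.+1 D [:: t] = iter k D (deriv_term net t).
Proof. by rewrite iterSr /= /Defs.deriv /= cats0. Qed.

Lemma mem_deriv t P : t \in D P -> exists c r x i rx,
  [/\ ((c, r), x) \in P, i \in x, rx \in net &
   t = (((c * Posz (count_mem i x) * net_change i rx)%R, rlab rx :: r),
        rlhs rx ++ rem i x)].
Proof.
case/flattenP=> _ /mapP [[[c r] x] Hin ->] /flattenP [_ /mapP [i Hi ->]] /mapP [rx Hrx ->].
by exists c, r, x, i, rx; rewrite mem_undup in Hi.
Qed.

Lemma deriv_term_species c rho y : deriv_term net ((c, rho), [:: y]) =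
  [seq (((c * net_change y rx)%R, rlab rx :: rho), rlhs rx) | rx <- net].
Proof. by rewrite /deriv_term /= cats0; apply: eq_map => rx; rewrite eqxx /= cats0 mulr1. Qed.

Lemma coef_iter_deriv_species k c rho y T r :
  coef_at (iter k.+1 D [:: ((c, rho), [:: y])]) T r =
  (\sum_(rx <- net)
     coef_at (iter k D [:: (((c * net_change y rx)%R, rlab rx :: rho), rlhs rx)]) T r)%R.
Proof. by rewrite iter_deriv_term deriv_term_species coef_iter_deriv_sum big_map. Qed.

Definition append_species (y : species) (t : Defs.term) : Defs.term := (t.1, t.2 ++ [:: y]).

Lemma deriv_term_append c rho x y : y \notin x ->
  deriv_term net ((c, rho), x ++ [:: y]) =
  map (append_species y) (deriv_term net ((c, rho), x)) ++
  [seq (((c * net_change y rx)%R, rlab rx :: rho), rlhs rx ++ x) | rx <- net].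
Proof.
move=> Hy; rewrite /deriv_term undup_cat.
have -> : [seq z <- undup x | z \notin [:: y]] = undup x.
  apply/all_filterP/allP => z; rewrite mem_undup inE => Hz.
  by apply: contraNN Hy => /eqP <-.
rewrite map_cat flatten_cat /= cats0; congr (_ ++ _).
  rewrite map_flatten -map_comp; congr flatten; apply/eq_in_map => i.
  rewrite mem_undup => Hi /=; rewrite -map_comp; apply: eq_map => rx /=.
  have Hiy : i != y by apply: contraNneq Hy => <-.
  rewrite /append_species /= count_cat /= eq_sym (negbTE Hiy) /=.
  by rewrite (rem_catl _ Hi) catA (addn0 (count_mem i x)).
apply: eq_map => rx; rewrite count_cat /= eqxx (count_memPn Hy) /= mulr1.
by rewrite rem_catr //= eqxx cats0.
Qed.

Section Invariant.
Variables (Phi : seq species -> Prop) (T : seq species).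
Hypothesis Phi_notT : forall z, Phi z -> ~~ perm_eq z T.
Hypothesis Phi_step : forall x i rx, Phi x -> i \in x -> rx \in net ->
  count_mem i (rrhs rx) != count_mem i (rlhs rx) -> Phi (rlhs rx ++ rem i x).

(* Only reactions that change the count of the differentiated species give
   nonzero terms, so [Phi] is an invariant of the nonzero terms. *)
Lemma coef_iter_deriv_invariant k P r :
  (forall t, t \in P -> t.1.1 = 0%R \/ Phi t.2) -> coef_at (iter k D P) T r = 0%R.
Proof.
move=> HP; have {HP} : forall t, t \in iter k D P -> t.1.1 = 0%R \/ Phi t.2.
  elim: k => //= k IH _ /mem_deriv [c [r' [x [i [rx [Ht Hi Hrx ->]]]]]] /=.
  case: (IH _ Ht) => /= [-> | Hx]; first by left; rewrite !mul0r.
  have [E|E] := eqVneq (count_mem i (rrhs rx)) (count_mem i (rlhs rx)).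
    by left; rewrite /net_change E subrr mulr0.
  by right; apply: Phi_step.
move=> H; apply: coef_at_eq0 => t /H [] // /Phi_notT Hn HT.
by rewrite HT in Hn.
Qed.
End Invariant.

Definition scale_terms (c : int) (rho : seq rlabel) (P : Defs.poly) : Defs.poly :=
  [seq (((c * t.1.1)%R, t.1.2 ++ rho), t.2) | t <- P].

Lemma iter_deriv_scale k c rho P :
  iter k D (scale_terms c rho P) = scale_terms c rho (iter k D P).
Proof.
elim: k => //= k ->; rewrite /Defs.deriv /scale_terms map_flatten -map_comp.
rewrite -[in RHS]map_comp; congr flatten; apply: eq_map => [[[c' r] x]] /=.
rewrite /deriv_term map_flatten -!map_comp; congr flatten; apply: eq_map => i /=.
by rewrite -map_comp; apply: eq_map => rx /=; rewrite !mulrA.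
Qed.

Lemma coef_iter_deriv_scale k c rho x T r :
  coef_at (iter k D [:: ((c, rho), x)]) T r =
  (c * coef_rmul (iter k D [:: ((1%R, [::]), x)]) T rho r)%R.
Proof.
have -> : [:: ((c, rho), x)] = scale_terms c rho [:: ((1%R, [::]), x)].
  by rewrite /scale_terms /= mulr1.
by rewrite iter_deriv_scale /coef_at /scale_terms big_map mulr_sumr.
Qed.

Lemma coef_iter_deriv_zero k rho x T r : coef_at (iter k D [:: ((0%R, rho), x)]) T r = 0%R.
Proof. by rewrite coef_iter_deriv_scale mul0r. Qed.

End TotalDerivative.

Lemma coef_rmul_eq0 P T rho r :
  (forall r', coef_at P T r' = 0%R) -> coef_rmul P T rho r = 0%R.
Proof.
move=> H.
have [[t0 _ Ht0] | /hasPn Hn] :=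
  altP (@hasP _ (fun t : Defs.term => perm_eq (t.1.2 ++ rho) r) P).
  rewrite -(H t0.1.2); apply: eq_bigl => t; congr andb.
  by apply/idP/idP => Hp; [rewrite -(perm_cat2r rho) (perm_trans Hp) // perm_sym
                          | apply: perm_trans Ht0; rewrite perm_cat2r].
rewrite /coef_rmul big_seq_cond big1 // => t /and3P [Ht _ Hp].
by move: (Hn _ Ht); rewrite Hp.
Qed.

Definition layer (s : species) : nat :=
  match s with Esp => 0 | Fsp m | Ssp m _ | Usp m _ | Vsp m _ => m end.

Definition is_F_or_V (p : nat) (s : species) : bool :=
  match s with Fsp m | Vsp m _ => m == p | _ => false end.

Lemma intermediate_topS L k : intermediate (topS L k) = false. Proof. by case: k. Qed.
Lemma layer_topS L k : layer (topS L k) = k. Proof. by case: k. Qed.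
Lemma is_F_or_V_topS L p k : is_F_or_V p (topS L k) = false. Proof. by case: k. Qed.

Lemma layer_rxns_ind (L : nat -> nat) m j (P : reaction -> Prop) :
  P (Rxn [:: topS L m.-1; Ssp m j.-1] [:: Usp m j] (ra m j)) ->
  P (Rxn [:: Usp m j] [:: topS L m.-1; Ssp m j.-1] (rb m j)) ->
  P (Rxn [:: Usp m j] [:: topS L m.-1; Ssp m j] (rc m j)) ->
  P (Rxn [:: Fsp m; Ssp m j] [:: Vsp m j] (rat_ m j)) ->
  P (Rxn [:: Vsp m j] [:: Fsp m; Ssp m j] (rbt m j)) ->
  P (Rxn [:: Vsp m j] [:: Fsp m; Ssp m j.-1] (rct m j)) ->
  forall rx, rx \in layer_rxns L m j -> P rx.
Proof.
move=> p1 p2 p3 p4 p5 p6 rx; rewrite /layer_rxns !inE.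
by do ![case/orP=> [/eqP -> //|]]; move/eqP ->.
Qed.

Section Cascade.
Variables (N : nat) (L : nat -> nat).
Local Notation net := (cascade N L).

Lemma mem_cascade rx : rx \in net -> exists m j,
  [/\ 0 < m <= N, 0 < j <= L m & rx \in layer_rxns L m j].
Proof.
case/flattenP => _ /mapP [m Hm ->] /flattenP [_ /mapP [j Hj ->]] Hrx.
by exists m, j; move: Hm Hj; rewrite !mem_iota; split => //; lia.
Qed.

Lemma count_cascade (p : pred reaction) m0 j0 :
  0 < m0 <= N -> 0 < j0 <= L m0 ->
  (forall m j, count p (layer_rxns L m j) = ((m == m0) && (j == j0)) :> nat) ->
  count p net = 1%N.
Proof.
move=> Hm0 Hj0 Hp; rewrite /cascade count_flatten -map_comp.
have layer_count m : count p (flatten [seq layer_rxns L m j | j <- iota 1 (L m)]) =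
                     (m == m0) :> nat.
  rewrite count_flatten -map_comp (eq_map (g := fun j => nat_of_bool ((m == m0) && (j == j0)))).
    rewrite sumn_count; case: eqVneq => [->|_] /=; last by elim: (iota _ _).
    by rewrite (@eq_count _ _ (pred1 j0)) // count_uniq_mem ?iota_uniq // mem_iota; lia.
  by move=> j; exact: Hp.
rewrite (eq_map layer_count) sumn_count count_uniq_mem ?iota_uniq // mem_iota.
by apply/eqP; rewrite eqb1; lia.
Qed.

Lemma lhs_cascade rx : rx \in net ->
  (exists W, rlhs rx = [:: W] /\ intermediate W) \/
  (exists A B, rlhs rx = [:: A; B] /\ reacts net A B).
Proof.
move=> Hrx; have [m [j [_ _ Hin]]] := mem_cascade Hrx; move: Hrx.
elim/layer_rxns_ind: Hin => /= Hrx; try by left; eexists.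
all: right; do 2 eexists; split; first reflexivity.
all: rewrite /reacts ?intermediate_topS /=; apply/hasP; eexists; first exact: Hrx.
all: by rewrite /= perm_refl.
Qed.

Lemma reacts_sym A B : reacts net A B = reacts net B A.
Proof.
rewrite /reacts andbCA; congr andb; congr andb; apply: eq_has => rx.
by have /permPr -> : perm_eq [:: A; B] [:: B; A] by rewrite (perm_catC [:: A] [:: B]).
Qed.

Lemma lhs_layer_changed rx i : rx \in net ->
  count_mem i (rrhs rx) != count_mem i (rlhs rx) ->
  exists2 s0, s0 \in rlhs rx & layer i <= layer s0.
Proof.
case/mem_cascade => m [j [_ _ Hin]] /mem_changed.
elim/layer_rxns_ind: Hin => /=; rewrite !inE => /or3P [] /eqP ->.
all: first [ by exists (Ssp m j.-1); rewrite ?inE ?eqxx ?orbT //= ?layer_topS; lia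
           | by exists (Usp m j); rewrite ?inE ?eqxx ?orbT //= ?layer_topS; lia
           | by exists (Fsp m); rewrite ?inE ?eqxx ?orbT //= ?layer_topS; lia
           | by exists (Vsp m j); rewrite ?inE ?eqxx ?orbT //= ?layer_topS; lia ].
Qed.

Lemma lhs_F_or_V_changed p rx i : rx \in net ->
  count_mem i (rrhs rx) != count_mem i (rlhs rx) ->
  is_F_or_V p i -> has (is_F_or_V p) (rlhs rx).
Proof.
case/mem_cascade => m [j [_ _ Hin]] /mem_changed.
elim/layer_rxns_ind: Hin => /=; rewrite !inE => /or3P [] /eqP -> //=.
all: by rewrite ?is_F_or_V_topS // => ->; rewrite ?orbT.
Qed.

End Cascade.

Section Layer.
Variables (N : nat) (L : nat -> nat) (n : nat).
Hypothesis hL : forall m, 1 <= m <= N -> 1 <= L m.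
Hypothesis hn : 2 <= n <= N.
Local Notation net := (cascade N L).
Local Notation D := (Defs.deriv net).
Local Notation Enz := (Ssp n.-1 (L n.-1)).
Local Notation Spen := (Ssp n (L n).-1).
Local Notation Utop := (Usp n (L n)).
Local Notation Stop := (Ssp n (L n)).

Lemma topS_Enz : topS L n.-1 = Enz.
Proof. by case: n hn => [|[|k]]. Qed.

Lemma L_n_gt0 : 0 < L n.
Proof. by apply: hL; lia. Qed.

Lemma ra_reaction rx : rx \in net -> rlab rx = ra n (L n) ->
  rlhs rx = [:: Enz; Spen] /\ rrhs rx = [:: Utop].
Proof.
case/mem_cascade => m [j [_ _ Hin]].
by elim/layer_rxns_ind: Hin => //= [[-> ->]]; rewrite topS_Enz.
Qed.

Lemma rc_reaction rx : rx \in net -> rlab rx = rc n (L n) ->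
  rlhs rx = [:: Utop] /\ rrhs rx = [:: Enz; Stop].
Proof.
case/mem_cascade => m [j [_ _ Hin]].
by elim/layer_rxns_ind: Hin => //= [[-> ->]]; rewrite topS_Enz.
Qed.

Lemma count_ra : count (fun rx => rlab rx == ra n (L n)) net = 1%N.
Proof.
apply: (count_cascade (m0 := n) (j0 := L n)); [lia | by rewrite L_n_gt0 /= |].
by move=> m j; rewrite /= ?xpair_eqE /= ?addn0.
Qed.

Lemma count_rc : count (fun rx => rlab rx == rc n (L n)) net = 1%N.
Proof.
apply: (count_cascade (m0 := n) (j0 := L n)); [lia | by rewrite L_n_gt0 /= |].
by move=> m j; rewrite /= ?xpair_eqE /= ?addn0.
Qed.

Lemma Utop_changed_lhs rx : rx \in net ->
  count_mem Utop (rrhs rx) != count_mem Utop (rlhs rx) ->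
  rlab rx != ra n (L n) -> rlhs rx = [:: Utop].
Proof.
case/mem_cascade => m [j [_ _ Hin]] /mem_changed.
elim/layer_rxns_ind: Hin => /=; case: (m.-1) => [|k] /=; rewrite !inE !species_eqE ?xpair_eqE /=.
all: try (case/orP); try (case/andP => /eqP <- /eqP <-); rewrite ?eqxx //.
Qed.

Lemma Enz_neq_Spen : Enz != Spen.
Proof. by rewrite species_eqE /= !xpair_eqE /=; apply/negP => /andP [/eqP]; lia. Qed.

Lemma Enz_neq_Stop : Enz != Stop.
Proof. by rewrite species_eqE /= !xpair_eqE /=; apply/negP => /andP [/eqP]; lia. Qed.

Definition upper (s0 : species) : bool := n <= layer s0.

(* A step consuming a sticky species produces another one. *)
Definition sticky (s0 : species) : bool := (n < layer s0) || is_F_or_V n s0.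

Lemma Stop_changed_sticky rx : rx \in net ->
  count_mem Stop (rrhs rx) != count_mem Stop (rlhs rx) ->
  rlab rx != rc n (L n) -> has sticky (rlhs rx).
Proof.
case/mem_cascade => m [j [Hm Hj Hin]] /mem_changed.
elim/layer_rxns_ind: Hin => /=; case Ek: (m.-1) => [|k] /=; rewrite !inE !species_eqE ?xpair_eqE /=.
all: try (case/orP); try (case/andP => /eqP ? /eqP ?); subst; rewrite /sticky /= ?eqxx ?orbT //.
all: move=> H; rewrite ?orbF; try lia.
all: match goal with H : is_true ((?a && ?b) == true) |- _ =>
       move/eqP: H => /andP [/eqP ? /eqP ?] end; subst; lia.
Qed.

Lemma reacts_Spen B : reacts net Spen B -> B = Enz \/ B = Fsp n.
Proof.
case/and3P => _ _ /hasP [rx Hrx /andP []].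
case/mem_cascade: Hrx => m [j [_ _ Hin]].
elim/layer_rxns_ind: Hin => //= /perm_eq_pair [[E1 E2]|[E1 E2]] _.
- move: E1; case: m.-1 => [|k] //= [E1 E3].
  by rewrite E1 in E3; have := L_n_gt0; lia.
- by case: E2 => ? _; subst m; left; rewrite -E1 topS_Enz.
- by [].
- by case: E2 => ? _; subst m; right.
Qed.

Lemma count_upper_mono x i rx : i \in x -> rx \in net ->
  count_mem i (rrhs rx) != count_mem i (rlhs rx) ->
  count upper x <= count upper (rlhs rx ++ rem i x).
Proof.
move=> Hi Hrx Hc; rewrite count_cat (count_remE upper Hi).
case Ui: (upper i) => /=; last lia.
have [s0 Hs0 Hl] := lhs_layer_changed Hrx Hc.
suff: 0 < count upper (rlhs rx) by lia.
by rewrite -has_count; apply/hasP; exists s0 => //; move: Ui; rewrite /upper; lia.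
Qed.

Lemma sticky_step x i rx : has sticky x -> i \in x -> rx \in net ->
  count_mem i (rrhs rx) != count_mem i (rlhs rx) -> has sticky (rlhs rx ++ rem i x).
Proof.
move=> /hasP [d Hd Sd] Hi Hrx Hc; rewrite has_cat.
have [Edi|Hdi] := eqVneq d i; last first.
  by apply/orP; right; apply/hasP; exists d => //; exact: rem_mem.
subst d; apply/orP; left; move: Sd; rewrite /sticky => /orP [Hl|HF].
  have [s0 Hs0 Hl2] := lhs_layer_changed Hrx Hc; apply/hasP; exists s0 => //.
  by rewrite /sticky; apply/orP; left; lia.
by apply: sub_has (lhs_F_or_V_changed Hrx Hc HF) => z ->; rewrite orbT.
Qed.

Lemma coef_upper_count_eq0 k c rho x T r : count upper T < count upper x ->
  coef_at (iter k D [:: ((c, rho), x)]) T r = 0%R.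
Proof.
move=> Hx; apply: (coef_iter_deriv_invariant (Phi := fun z => count upper T < count upper z)).
- by move=> z; apply: contraTN => /permP ->; rewrite ltnn.
- by move=> x' i rx H1 Hi Hrx Hc; have := count_upper_mono Hi Hrx Hc; lia.
- by move=> t; rewrite inE => /eqP -> /=; right.
Qed.

Lemma coef_sticky_eq0 k c rho x T r : ~~ has sticky T -> has sticky x ->
  coef_at (iter k D [:: ((c, rho), x)]) T r = 0%R.
Proof.
move=> HT Hx; apply: (coef_iter_deriv_invariant (Phi := has sticky)).
- by move=> z Hz; apply: contra HT => /perm_has <-.
- by move=> x' i rx; exact: sticky_step.
- by move=> t; rewrite inE => /eqP -> /=; right.
Qed.

(* [[:: Enz]] counts as a source since it is the seed of the derivatives of
   s_{n-1,L_{n-1}}, all of whose monomials then contain a source. *)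
Definition source (w : seq species) : Prop :=
  [\/ exists W, w = [:: W] /\ intermediate W, w = [:: Enz] |
      exists A B, w = [:: A; B] /\ reacts net A B].

Definition has_source (z : seq species) : Prop :=
  exists w rest, source w /\ perm_eq z (w ++ rest).

Definition has_two_sources (z : seq species) : Prop :=
  exists w1 w2 rest, [/\ source w1, source w2 & perm_eq z (w1 ++ w2 ++ rest)].

Lemma lhs_source rx : rx \in net -> source (rlhs rx).
Proof. by case/lhs_cascade => ?; [apply: Or31 | apply: Or33]. Qed.

Lemma has_source_deriv t t' : t' \in deriv_term net t -> has_source t'.2.
Proof.
move=> Ht; have : t' \in D [:: t] by rewrite /Defs.deriv /= cats0.
case/mem_deriv => c [r [x [i [rx [_ _ Hrx ->]]]]] /=.
by exists (rlhs rx), (rem i x); split; [exact: lhs_source | exact: perm_refl].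
Qed.

Lemma has_two_sources_perm z z' : has_two_sources z -> perm_eq z z' -> has_two_sources z'.
Proof.
by case=> w1 [w2 [rest [h1 h2 hp]]] H; exists w1, w2, rest; split => //; rewrite -(permPl H).
Qed.

Lemma has_two_sources_step x i rx : has_two_sources x -> i \in x -> rx \in net ->
  has_two_sources (rlhs rx ++ rem i x).
Proof.
case=> w1 [w2 [rest [h1 h2 hp]]] Hi Hrx; have hl := lhs_source Hrx.
have := Hi; rewrite (perm_mem hp) !mem_cat => /or3P [] Hw;
  [exists (rlhs rx), w2, (rem i w1 ++ rest) | exists w1, (rlhs rx), (rem i w2 ++ rest)
  | exists w1, w2, (rlhs rx ++ rem i rest)].
all: split => //; apply/permP => p; have := count_remE p Hi; have := count_remE p Hw.
all: by rewrite (permP hp) !count_cat; lia.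
Qed.

Section Monomial.
Variables (M : seq species) (ell0 : nat).
Hypothesis hM : forall Z, Z \in M -> ~~ intermediate Z /\ layer Z < n.
Hypothesis hsqfree : uniq M.
Hypothesis hdisj : ~ (exists A B C D, [/\ [/\ A \in M, B \in M, C \in M & D \in M],
  uniq [:: A; B; C; D], reacts net A B & reacts net C D]).
Hypothesis hdiv : Enz \in M -> forall Z1 Z2, Z1 \in M -> Z2 \in M ->
  reacts net Z1 Z2 -> Z1 = Enz \/ Z2 = Enz.
Hypothesis hell0 : 1 <= ell0.
Hypothesis happ : appears (iter_deriv net ell0 Enz) M.
Hypothesis hfirst : forall ell, 1 <= ell < ell0 -> ~ appears (iter_deriv net ell Enz) M.

Lemma Spen_notin_M : Spen \notin M.
Proof. by apply/negP => /hM [_] /=; rewrite ltnn. Qed.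

Lemma Fsp_notin_M : Fsp n \notin M.
Proof. by apply/negP => /hM [_] /=; rewrite ltnn. Qed.

Lemma count_upper_M : count upper M = 0%N.
Proof.
apply/eqP; rewrite -leqn0 leqNgt -has_count; apply/hasPn => Z /hM [_].
by rewrite /upper -ltnNge.
Qed.

Lemma not_sticky_SpenM : ~~ has sticky (Spen :: M).
Proof.
apply/hasPn => Z; rewrite inE => /orP [/eqP ->|/hM [Hi Hl]]; first by rewrite /sticky /= ltnn.
rewrite /sticky negb_or -leqNgt ltnW //=.
by case: Z Hi Hl => //= m _; apply: contraTN => /eqP ->; rewrite ltnn.
Qed.

Lemma reacting_pair_M w : source w -> Enz \notin w -> {subset w <= Spen :: M} ->
  exists A B, [/\ w = [:: A; B], A \in M, B \in M & reacts net A B].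
Proof.
case=> [[W [-> HW]]|->|[A [B [-> HAB]]]] HE Hs.
- have := Hs W; rewrite !inE eqxx => /(_ isT) /orP [/eqP E|/hM []]; last by rewrite HW.
  by rewrite E in HW.
- by rewrite inE eqxx in HE.
have HA : A \in Spen :: M by apply: Hs; rewrite inE eqxx.
have HB : B \in Spen :: M by apply: Hs; rewrite !inE eqxx orbT.
move: HE; rewrite !inE negb_or => /andP [EA EB].
case/orP: HA => [/eqP EA'|MA].
  subst A; case/reacts_Spen: HAB => EB'; first by rewrite EB' eqxx in EB.
  by move: HB; rewrite EB' inE (negbTE Fsp_notin_M) orbF species_eqE.
case/orP: HB => [/eqP EB'|MB]; last by exists A, B.
subst B; rewrite reacts_sym in HAB; case/reacts_Spen: HAB => EA'.
  by rewrite EA' eqxx in EA.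
by case/negP: Fsp_notin_M; rewrite -EA'.
Qed.

(* Both sources avoid s_{n,L_n-1}, so each is a reacting pair of M or is
   [[:: Enz]]; square-freeness makes them disjoint. *)
Lemma not_two_sources_SpenM : ~ has_two_sources (Spen :: M).
Proof.
case=> w1 [w2 [rest [h1 h2 hp]]].
have U : uniq (w1 ++ w2 ++ rest) by rewrite -(perm_uniq hp) /= Spen_notin_M hsqfree.
have s1 : {subset w1 <= Spen :: M} by move=> z Hz; rewrite (perm_mem hp) mem_cat Hz.
have s2 : {subset w2 <= Spen :: M} by move=> z Hz; rewrite (perm_mem hp) !mem_cat Hz orbT.
have EnzM (w : seq species) : {subset w <= Spen :: M} -> Enz \in w -> Enz \in M.
  by move=> Hw /Hw; rewrite inE (negbTE Enz_neq_Spen).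
have [E1|E1] := boolP (Enz \in w1); have [E2|E2] := boolP (Enz \in w2).
- by move: U; rewrite cat_uniq => /and3P [_ /hasP []]; exists Enz; rewrite // mem_cat E2.
- have [A [B [Ew MA MB HAB]]] := reacting_pair_M h2 E2 s2.
  by case: (hdiv (EnzM _ s1 E1) MA MB HAB) => EX; move: E2; rewrite Ew !inE EX eqxx ?orbT.
- have [A [B [Ew MA MB HAB]]] := reacting_pair_M h1 E1 s1.
  by case: (hdiv (EnzM _ s2 E2) MA MB HAB) => EX; move: E1; rewrite Ew !inE EX eqxx ?orbT.
have [A [B [Ew1 MA MB HAB]]] := reacting_pair_M h1 E1 s1.
have [C [D' [Ew2 MC MD HCD]]] := reacting_pair_M h2 E2 s2.
apply: hdisj; exists A, B, C, D'; split => //.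
by move: U; rewrite catA cat_uniq Ew1 Ew2 => /andP [].
Qed.

Lemma coef_two_sources_eq0 k P r : (forall t, t \in P -> has_two_sources t.2) ->
  coef_at (iter k D P) (Spen :: M) r = 0%R.
Proof.
move=> HP; apply: (coef_iter_deriv_invariant (Phi := has_two_sources)).
- by move=> z Hz; apply/negP => /(has_two_sources_perm Hz); exact: not_two_sources_SpenM.
- by move=> x i rx H1 Hi Hrx _; exact: has_two_sources_step.
- by move=> t /HP; right.
Qed.

(* A derivative acting on the factor s_{n,L_n-1} adds a second source, and a
   factor of layer >= n already present in [x] can never be removed. *)
Lemma coef_append_Spen k P r : (forall t, t \in P -> has_source t.2) ->
  coef_at (iter k D (map (append_species Spen) P)) (Spen :: M) r =
  coef_at (iter k D P) M r.
Proof.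
elim: k P r => [|k IH] P r HP.
  rewrite /coef_at /= big_map; apply: eq_bigl => t /=; congr andb.
  have /permPl -> : perm_eq (t.2 ++ [:: Spen]) (Spen :: t.2) by rewrite perm_catC.
  by rewrite perm_cons.
rewrite coef_iter_deriv_sum big_map [RHS]coef_iter_deriv_sum.
apply: eq_big_seq => [[[c rho] x]] Ht.
rewrite (_ : append_species Spen _ = ((c, rho), x ++ [:: Spen])) //.
have upper_Spen : upper Spen by rewrite /upper.
have [HS|HS] := boolP (Spen \in x).
  have upper_x : 0 < count upper x by rewrite -has_count; apply/hasP; exists Spen.
  have upper_SpenM : count upper (Spen :: M) = 1%N by rewrite /= upper_Spen count_upper_M.
  by rewrite !coef_upper_count_eq0 ?count_upper_M ?upper_SpenM ?count_cat //= upper_Spen addn1.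
rewrite !iter_deriv_term deriv_term_append // iter_deriv_cat coef_at_cat IH; last first.
  by move=> t; apply: has_source_deriv.
rewrite coef_two_sources_eq0 ?addr0 // => _ /mapP [rx Hrx ->] /=.
have [w [rest [hw hp]]] := HP _ Ht.
exists (rlhs rx), w, rest; split; [exact: lhs_source | by [] | by rewrite perm_cat2l].
Qed.

Lemma Enz_not_perm_M : ~~ perm_eq [:: Enz] M.
Proof.
apply/negP => HEM; case: happ => r0; apply/negP; rewrite negbK rcoef_coef_of.
apply/eqP/coef_at_eq0 => t; rewrite /iter_deriv; case: ell0 hell0 => // k _ /=.
case/mem_deriv => c [r [x [i [rx [_ _ Hrx ->]]]]] /= Hp.
case: (lhs_cascade Hrx) => [[W [EW HW]]|[A [B [EAB _]]]].
  have : W \in M by rewrite -(perm_mem Hp) mem_cat EW inE eqxx.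
  by case/hM; rewrite HW.
by have := perm_size Hp; rewrite -(perm_size HEM) size_cat EAB.
Qed.

Lemma coef_rmul_Enz_early k rho r : k < ell0 ->
  coef_rmul (iter_deriv net k Enz) M rho r = 0%R.
Proof.
move=> Hk; apply: coef_rmul_eq0 => r'; case: k Hk => [_|k Hk].
  apply: coef_at_eq0 => t; rewrite inE => /eqP -> /= Hp.
  by move: Enz_not_perm_M; rewrite Hp.
apply/eqP; apply: contraT => H; exfalso; apply: (hfirst (ell := k.+1)); first lia.
by exists r'; rewrite rcoef_coef_of.
Qed.

Lemma coef_Enz_Spen k c rho r :
  coef_at (iter k D [:: ((c, rho), [:: Enz; Spen])]) (Spen :: M) r =
  (c * coef_rmul (iter_deriv net k Enz) M rho r)%R.
Proof.
have src t : t \in [:: ((c, rho), [:: Enz])] -> has_source t.2.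
  by rewrite inE => /eqP -> /=; exists [:: Enz], [::]; rewrite cats0; split; [apply: Or32|].
by have := coef_append_Spen k r src; rewrite /= => ->; exact: coef_iter_deriv_scale.
Qed.

Lemma coef_Utop_step k c rho r :
  coef_at (iter k.+1 D [:: ((c, rho), [:: Utop])]) (Spen :: M) r =
  (c * coef_rmul (iter_deriv net k Enz) M (ra n (L n) :: rho) r
   + \sum_(rx <- net | rlab rx != ra n (L n))
       coef_at (iter k D [:: (((c * net_change Utop rx)%R, rlab rx :: rho), [:: Utop])])
         (Spen :: M) r)%R.
Proof.
rewrite coef_iter_deriv_species (bigID (fun rx => rlab rx == ra n (L n))) /=.
congr (_ + _)%R.
  apply: big_count1 count_ra _ => rx Hrx /eqP Ha.
  have [El Er] := ra_reaction Hrx Ha.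
  have -> : net_change Utop rx = 1%R by rewrite /net_change El Er /= eqxx; exact: erefl.
  by rewrite El Ha mulr1 coef_Enz_Spen.
rewrite big_seq_cond [RHS]big_seq_cond; apply: eq_bigr => rx /andP [Hrx Ha].
have [Hc|Hc] := eqVneq (count_mem Utop (rrhs rx)) (count_mem Utop (rlhs rx)).
  by rewrite /net_change Hc subrr mulr0 !coef_iter_deriv_zero.
by rewrite (Utop_changed_lhs Hrx Hc Ha).
Qed.

Lemma coef_Utop_early k c rho r : k <= ell0 ->
  coef_at (iter k D [:: ((c, rho), [:: Utop])]) (Spen :: M) r = 0%R.
Proof.
elim: k c rho => [|k IH] c rho Hk.
  apply: coef_at_eq0 => t; rewrite inE => /eqP -> /= Hp.
  have : Utop \in Spen :: M by rewrite -(perm_mem Hp) inE.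
  by rewrite inE => /orP [/eqP|/hM []].
rewrite coef_Utop_step coef_rmul_Enz_early ?mulr0 ?add0r; last lia.
by rewrite big1 // => rx _; apply: IH; lia.
Qed.

Lemma coef_Utop_ell0 c rho r :
  coef_at (iter ell0.+1 D [:: ((c, rho), [:: Utop])]) (Spen :: M) r =
  (c * coef_rmul (iter_deriv net ell0 Enz) M (ra n (L n) :: rho) r)%R.
Proof. by rewrite coef_Utop_step big1 ?addr0 // => rx _; exact: coef_Utop_early. Qed.

Lemma coef_Stop_step k r :
  coef_at (iter_deriv net k.+1 Stop) (Spen :: M) r =
  coef_at (iter k D [:: ((1%R, [:: rc n (L n)]), [:: Utop])]) (Spen :: M) r.
Proof.
rewrite /iter_deriv coef_iter_deriv_species (bigID (fun rx => rlab rx == rc n (L n))) /=.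
rewrite [X in (_ + X)%R]big_seq_cond [X in (_ + X)%R]big1 ?addr0; last first.
  move=> rx /andP [Hrx Hl].
  have [Hc|Hc] := eqVneq (count_mem Stop (rrhs rx)) (count_mem Stop (rlhs rx)).
    by rewrite /net_change Hc subrr mulr0 coef_iter_deriv_zero.
  exact: coef_sticky_eq0 not_sticky_SpenM (Stop_changed_sticky Hrx Hc Hl).
apply: big_count1 count_rc _ => rx Hrx /eqP Hl.
have [El Er] := rc_reaction Hrx Hl.
have -> : net_change Stop rx = 1%R.
  by rewrite /net_change El Er /= (negbTE Enz_neq_Stop) eqxx; exact: erefl.
by rewrite El Hl mul1r.
Qed.

Lemma coef_Stop_early ell r : 1 <= ell < ell0 + 2 ->
  coef_at (iter_deriv net ell Stop) (Spen :: M) r = 0%R.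
Proof. by case: ell => // k /andP [_ Hk]; rewrite coef_Stop_step coef_Utop_early //; lia. Qed.

Lemma coef_Stop_ell0 r :
  coef_at (iter_deriv net (ell0 + 2) Stop) (Spen :: M) r =
  coef_rmul (iter_deriv net ell0 Enz) M [:: rc n (L n); ra n (L n)] r.
Proof.
rewrite addn2 coef_Stop_step coef_Utop_ell0 mul1r.
by apply: coef_rmul_perm; rewrite (perm_catC [:: _] [:: _]).
Qed.

End Monomial.
End Layer.

Theorem mainTheorem17 (N : nat) (L : nat -> nat)
  (hN : 1 <= N) (hL : forall m, 1 <= m <= N -> 1 <= L m)
  (n : nat) (hn : 2 <= n <= N)
  (M : seq species) (ell0 : nat) (hell0 : 1 <= ell0)
  (happ : appears (iter_deriv (cascade N L) ell0 (Ssp n.-1 (L n.-1))) M)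
  (hfirst : forall ell, 1 <= ell < ell0 ->
     ~ appears (iter_deriv (cascade N L) ell (Ssp n.-1 (L n.-1))) M)
  (hspec : forall Z, Z \in M ->
     (exists k, [/\ 1 <= k <= n.-1 &
        (exists2 j, j <= L k & Z = Ssp k j) \/ Z = Fsp k]) \/ Z = Esp)
  (hsqfree : uniq M)
  (hdisj : ~ (exists A B C D, [/\ [/\ A \in M, B \in M, C \in M & D \in M],
              uniq [:: A; B; C; D],
              reacts (cascade N L) A B & reacts (cascade N L) C D]))
  (hdiv : Ssp n.-1 (L n.-1) \in M ->
     forall Z1 Z2, Z1 \in M -> Z2 \in M -> reacts (cascade N L) Z1 Z2 ->
       Z1 = Ssp n.-1 (L n.-1) \/ Z2 = Ssp n.-1 (L n.-1)) :
  let Mhat := Ssp n (L n).-1 :: M in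
  [/\ appears (iter_deriv (cascade N L) (ell0 + 2) (Ssp n (L n))) Mhat,
      (forall ell, 1 <= ell < ell0 + 2 ->
         ~ appears (iter_deriv (cascade N L) ell (Ssp n (L n))) Mhat) &
      rpoly_eq (coef_of (iter_deriv (cascade N L) (ell0 + 2) (Ssp n (L n))) Mhat)
               (rmul_mon [:: rc n (L n); ra n (L n)]
                  (coef_of (iter_deriv (cascade N L) ell0 (Ssp n.-1 (L n.-1))) M))].
Proof.
move=> Mhat; rewrite {}/Mhat.
have hM Z : Z \in M -> ~~ intermediate Z /\ layer Z < n.
  by case/hspec => [[k [Hk [[j _ ->]| ->]]]|->] /=; split => //; lia.
have coef_ell0 := coef_Stop_ell0 hL hn hM hsqfree hdisj hdiv hell0 happ hfirst.
have coef_early := coef_Stop_early hL hn hM hsqfree hdisj hdiv hell0 happ hfirst.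
have coef_Mhat : rpoly_eq
    (coef_of (iter_deriv (cascade N L) (ell0 + 2) (Ssp n (L n))) (Ssp n (L n).-1 :: M))
    (rmul_mon [:: rc n (L n); ra n (L n)]
       (coef_of (iter_deriv (cascade N L) ell0 (Ssp n.-1 (L n.-1))) M)).
  by move=> r; rewrite rcoef_coef_of rcoef_rmul_mon coef_ell0.
split => //.
- case: happ => r0 Hr0; exists ([:: rc n (L n); ra n (L n)] ++ r0).
  by rewrite coef_Mhat rcoef_rmul_mon_cat.
- by move=> ell Hell [r]; rewrite rcoef_coef_of coef_early ?eqxx.
Qed.
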